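(* In the $E$-generic bisimulation game on an LTS $L=\langle S,A,\to\rangle$ (for any $E\subseteq\{\frown,\smile\}$), the configurations $\langle (s,t),c,m,*\rangle_S$ and $\langle (s,t),c,m,\checkmark\rangle_S$ are won by the same player, and so are $\langle (s,t),c,m,*\rangle_D$ and $\langle (s,t),c,m,\checkmark\rangle_D$.
   Context: An LTS is $\langle S,A,\to\rangle$ with states $S$, actions $A$ containing the internal action $\tau$, and $\to\subseteq S\times A\times S$; write $s\xrightarrow{a}t$. Generic bisimulation game. Let $\frown,\smile$ be formal tags and $E\subseteq\{\frown,\smile\}$. Spoiler-owned configurations $\langle (s,t),c,m,r\rangle_S$ and Duplicator-owned $\langle (s,t),c,m,r\rangle_D$ have $(s,t)\in S\times S$, $c\in (A\times S)\cup\{\dagger\}$, $m\in (S\times\{\frown,\smile\})\cup\{\dagger\}$, $r\in\{*,\checkmark\}$. From $\langle (s,t),c,m,r\rangle_S$ Spoiler may: (S1) move to $\langle (s,t),c,m,*\rangle_D$ if $c\neq\dagger$; (S2a) for some $s\xrightarrow{a}s'$, move to $\langle (s,t),(a,s'),(t,\frown),*\rangle_D$ if $c=\dagger$; (S2b) for some $s\xrightarrow{a}s'$, move to $\langle (s,t),(a,s'),(t,\frown),\checkmark\rangle_D$ if $c\neq (a,s')$; (S3) for some $t\xrightarrow{a}t'$, move to $\langle (t,s),(a,t'),(s,\frown),\checkmark\rangle_D$. From $\langle (u,v),(a,u'),(\bar v,f),r\rangle_D$ Duplicator may: (D1) move to $\langle (u',\bar v),\dagger,\dagger,\checkmark\rangle_S$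 if $a=\tau$; (D2) if $f=\frown$ and $\bar v\xrightarrow{a}v'$: (a) move to $\langle (u',v'),(a,u'),(v',\smile),*\rangle_S$, or (b) move to $\langle (u',v'),\dagger,\dagger,\checkmark\rangle_S$, or (c) only if $\smile\in E$, move to $\langle (u,v),(a,u'),(v',\smile),*\rangle_S$; (D3) for some $\bar v\xrightarrow{\tau}v'$: (a) move to $\langle (u,v'),(a,u'),(v',f),*\rangle_S$, or (b) only if $f=\smile$, move to $\langle (u',v'),\dagger,\dagger,\checkmark\rangle_S$, or (c) only if $f\in E$, move to $\langle (u,v),(a,u'),(v',f),*\rangle_S$. Duplicator wins a finite play if Spoiler gets stuck, and an infinite play if it has infinitely many $\checkmark$ rewards; other plays are won by Spoiler. A player wins a configuration if she has a strategy winning all plays starting in it. *)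

From Stdlib Require Import List.
Import ListNotations.

Inductive player := Spoiler | Duplicator.
Inductive tag := Frown | Smile.

Section Game.
Variables (St A : Type) (tau : A) (trans : St -> A -> St -> Prop).
Variable E : tag -> Prop.

(* A configuration <(s,t), c, m, r>_owner.
   cur = None encodes c = †, mem = None encodes m = †,
   rew = true encodes r = ✓, rew = false encodes r = *. *)
Record config := Config {
  owner : player;
  pos : St * St;
  cur : option (A * St);
  mem : option (St * tag);
  rew : bool }.

Inductive move : config -> config -> Prop :=
| S1 : forall s t c m r, c <> None ->
    move (Config Spoiler (s,t) c m r) (Config Duplicator (s,t) c m false)
| S2a : forall s t m r a s', trans s a s' ->
    move (Config Spoiler (s,t) None m r)
         (Config Duplicator (s,t) (Some (a,s')) (Some (t,Frown)) false)
| S2b : forall s t c m r a s', trans s a s' -> c <> Some (a,s') ->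
    move (Config Spoiler (s,t) c m r)
         (Config Duplicator (s,t) (Some (a,s')) (Some (t,Frown)) true)
| S3 : forall s t c m r a t', trans t a t' ->
    move (Config Spoiler (s,t) c m r)
         (Config Duplicator (t,s) (Some (a,t')) (Some (s,Frown)) true)
| D1 : forall u v a u' vb f r, a = tau ->
    move (Config Duplicator (u,v) (Some (a,u')) (Some (vb,f)) r)
         (Config Spoiler (u',vb) None None true)
| D2a : forall u v a u' vb r v', trans vb a v' ->
    move (Config Duplicator (u,v) (Some (a,u')) (Some (vb,Frown)) r)
         (Config Spoiler (u',v') (Some (a,u')) (Some (v',Smile)) false)
| D2b : forall u v a u' vb r v', trans vb a v' ->
    move (Config Duplicator (u,v) (Some (a,u')) (Some (vb,Frown)) r)
         (Config Spoiler (u',v') None None true)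
| D2c : forall u v a u' vb r v', trans vb a v' -> E Smile ->
    move (Config Duplicator (u,v) (Some (a,u')) (Some (vb,Frown)) r)
         (Config Spoiler (u,v) (Some (a,u')) (Some (v',Smile)) false)
| D3a : forall u v a u' vb f r v', trans vb tau v' ->
    move (Config Duplicator (u,v) (Some (a,u')) (Some (vb,f)) r)
         (Config Spoiler (u,v') (Some (a,u')) (Some (v',f)) false)
| D3b : forall u v a u' vb r v', trans vb tau v' ->
    move (Config Duplicator (u,v) (Some (a,u')) (Some (vb,Smile)) r)
         (Config Spoiler (u',v') None None true)
| D3c : forall u v a u' vb f r v', trans vb tau v' -> E f ->
    move (Config Duplicator (u,v) (Some (a,u')) (Some (vb,f)) r)
         (Config Spoiler (u,v) (Some (a,u')) (Some (v',f)) false).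

Definition stuck (x : config) : Prop := forall y, ~ move x y.

Definition strategy := list config -> config -> config.

Definition valid_strategy (P : player) (sigma : strategy) : Prop :=
  forall h x, owner x = P -> (exists y, move x y) -> move x (sigma h x).

Definition infinite_play (p : config) (f : nat -> config) : Prop :=
  f 0 = p /\ forall n, move (f n) (f (S n)).

Definition inf_consistent (P : player) (sigma : strategy) (f : nat -> config) : Prop :=
  forall n, owner (f n) = P -> f (S n) = sigma (map f (seq 0 n)) (f n).

Definition finite_play (p : config) (n : nat) (g : nat -> config) : Prop :=
  g 0 = p /\ (forall i, i < n -> move (g i) (g (S i))) /\ stuck (g n).

Definition fin_consistent (P : player) (sigma : strategy) (n : nat) (g : nat -> config) : Prop :=
  forall i, i < n -> owner (g i) = P -> g (S i) = sigma (map g (seq 0 i)) (g i).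

Definition inf_many_checks (f : nat -> config) : Prop :=
  forall N, exists n, N <= n /\ rew (f n) = true.

Definition wins_infinite (P : player) (f : nat -> config) : Prop :=
  match P with
  | Duplicator => inf_many_checks f
  | Spoiler => ~ inf_many_checks f
  end.

Definition wins_finite (P : player) (n : nat) (g : nat -> config) : Prop :=
  owner (g n) <> P.

Definition wins (P : player) (p : config) : Prop :=
  exists sigma, valid_strategy P sigma /\
    (forall f, infinite_play p f -> inf_consistent P sigma f -> wins_infinite P f) /\
    (forall n g, finite_play p n g -> fin_consistent P sigma n g -> wins_finite P n g).

End Game.

(** The reward flag of a configuration influences neither the moves
    available from it nor the winner of a play starting at it: finite plays are
    decided by who is stuck, and infinite plays by infinitely many rewards,
    to which a single first configuration contributes nothing.  So a strategy
    from one configuration works from the configuration that differs only in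
    its reward flag, once the first entry of its history is corrected. *)

From Stdlib Require Import List Lia.
Import ListNotations.

Section RewardIrrelevance.
Variables (St A : Type) (tau : A) (trans : St -> A -> St -> Prop) (E : tag -> Prop).

Local Notation config := (config St A).
Local Notation move := (move St A tau trans E).
Local Notation wins := (wins St A tau trans E).

Definition set_rew (b : bool) (x : config) : config :=
  Config St A (owner St A x) (pos St A x) (cur St A x) (mem St A x) b.

Lemma move_set_rew (b : bool) (x y : config) : move (set_rew b x) y <-> move x y.
Proof.
  destruct x as [o ps c m r]; unfold set_rew; simpl.
  split; intro Hxy; inversion Hxy; subst; econstructor; eauto.
Qed.

Lemma set_rew_rew (b : bool) (x : config) : set_rew (rew St A x) (set_rew b x) = x.
Proof. now destruct x. Qed.

Definition with_head (x : config) (f : nat -> config) (n : nat) : config :=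
  match n with 0 => x | S k => f (S k) end.

Lemma map_with_head_seq1 (x : config) (f : nat -> config) (k : nat) :
  map (with_head x f) (seq 1 k) = map f (seq 1 k).
Proof.
  apply map_ext_in; intros [|i] Hi; [apply in_seq in Hi; lia | reflexivity].
Qed.

Lemma inf_many_checks_with_head (x : config) (f : nat -> config) :
  inf_many_checks St A (with_head x f) <-> inf_many_checks St A f.
Proof.
  split; intros Hf N; destruct (Hf (S N)) as [[|k] [Hk Hr]]; try lia;
    exists (S k); split; [lia | exact Hr | lia | exact Hr].
Qed.

Lemma infinite_play_with_head (x x' : config) (f : nat -> config) :
  (forall y, move x' y -> move x y) ->
  infinite_play St A tau trans E x' f ->
  infinite_play St A tau trans E x (with_head x f).
Proof.
  intros Hx' [H0 Hf]; split; [reflexivity |].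
  intros [|n]; [| apply Hf].
  apply Hx'; rewrite <- H0; apply Hf.
Qed.

Lemma finite_play_with_head (x x' : config) (n : nat) (g : nat -> config) :
  (forall y, move x' y <-> move x y) ->
  finite_play St A tau trans E x' n g ->
  finite_play St A tau trans E x n (with_head x g).
Proof.
  intros Hx' [H0 [Hg Hstuck]]; split; [reflexivity | split].
  - intros [|i] Hi; [| now apply Hg].
    apply Hx'; rewrite <- H0; now apply Hg.
  - destruct n as [|n]; [| exact Hstuck].
    intros y Hy; apply (Hstuck y); rewrite H0; now apply Hx'.
Qed.

Definition shift_strategy (x : config) (sigma : strategy St A) : strategy St A :=
  fun h y => match h with
             | [] => sigma [] (set_rew (rew St A x) y)
             | _ :: h' => sigma (x :: h') y
             end.

Lemma valid_shift_strategy (P : player) (x : config) (sigma : strategy St A) :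
  valid_strategy St A tau trans E P sigma ->
  valid_strategy St A tau trans E P (shift_strategy x sigma).
Proof.
  intros Hsigma [|z h] y Hy [y' Hyy']; simpl; [| now apply Hsigma; eauto].
  apply (move_set_rew (rew St A x)), Hsigma; [exact Hy |].
  exists y'; now apply move_set_rew.
Qed.

Section Shift.
Variables (b : bool) (x : config) (sigma : strategy St A) (f : nat -> config).
Hypothesis f_head : f 0 = set_rew b x.

Lemma owner_with_head (n : nat) : owner St A (with_head x f n) = owner St A (f n).
Proof. destruct n; [now rewrite f_head | reflexivity]. Qed.

Lemma shift_strategy_with_head (n : nat) :
  shift_strategy x sigma (map f (seq 0 n)) (f n)
  = sigma (map (with_head x f) (seq 0 n)) (with_head x f n).
Proof.
  destruct n as [|k]; simpl.
  - now rewrite f_head, set_rew_rew.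
  - now rewrite map_with_head_seq1.
Qed.

Lemma inf_consistent_with_head (P : player) :
  inf_consistent St A P (shift_strategy x sigma) f ->
  inf_consistent St A P sigma (with_head x f).
Proof.
  intros Hf n Hn; rewrite owner_with_head in Hn.
  simpl; rewrite (Hf n Hn); apply shift_strategy_with_head.
Qed.

Lemma fin_consistent_with_head (P : player) (n : nat) :
  fin_consistent St A P (shift_strategy x sigma) n f ->
  fin_consistent St A P sigma n (with_head x f).
Proof.
  intros Hf i Hi Hown; rewrite owner_with_head in Hown.
  simpl; rewrite (Hf i Hi Hown); apply shift_strategy_with_head.
Qed.

End Shift.

Lemma wins_set_rew (P : player) (b : bool) (x : config) :
  wins P x -> wins P (set_rew b x).
Proof.
  intros [sigma [Hvalid [Hinf Hfin]]].
  assert (Hmoves : forall y, move (set_rew b x) y <-> move x y) by apply move_set_rew.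
  exists (shift_strategy x sigma); split; [| split].
  - now apply valid_shift_strategy.
  - intros f Hplay Hcons.
    assert (Hwin : wins_infinite St A P (with_head x f)).
    { apply Hinf.
      - now apply infinite_play_with_head with (set_rew b x); [apply Hmoves |].
      - now apply inf_consistent_with_head with b; [apply Hplay |]. }
    destruct P; simpl in *; now rewrite <- (inf_many_checks_with_head x f).
  - intros n g Hplay Hcons.
    assert (Hwin : wins_finite St A P n (with_head x g)).
    { apply Hfin.
      - now apply finite_play_with_head with (set_rew b x).
      - now apply fin_consistent_with_head with b; [apply Hplay |]. }
    unfold wins_finite in *.
    now rewrite <- (owner_with_head b x g); [| apply Hplay].
Qed.

Lemma wins_rew_irrelevant (P o : player) (ps : St * St)
    (c : option (A * St)) (m : option (St * tag)) :
  wins P (Config St A o ps c m false)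
  <-> wins P (Config St A o ps c m true).
Proof.
  split; [apply (wins_set_rew P true) | apply (wins_set_rew P false)].
Qed.

End RewardIrrelevance.

Theorem proposition5p7 :
  forall (St A : Type) (tau : A) (trans : St -> A -> St -> Prop) (E : tag -> Prop)
    (s t : St) (c : option (A * St)) (m : option (St * tag)) (P : player),
    (@wins St A tau trans E P (@Config St A Spoiler (s,t) c m false)
       <-> @wins St A tau trans E P (@Config St A Spoiler (s,t) c m true)) /\
    (@wins St A tau trans E P (@Config St A Duplicator (s,t) c m false)
       <-> @wins St A tau trans E P (@Config St A Duplicator (s,t) c m true)).
Proof.
  intros; split; apply wins_rew_irrelevant.
Qed.
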